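(* Let $\lambda\in(0,1)$ and let $G$ be a finite simple connected graph with $n\ge 2$ vertices. Then $$Mt^{e}_{\lambda}(G)\;\le\;\max_{1\le D\le n-1}\left[\frac{\lambda\left[1-(D+1)\lambda^{D}+D\lambda^{D+1}\right]}{(\lambda-1)^2}+(n-D-1)D\lambda^{D}\right].$$ Moreover, equality holds for a broom on $n$ vertices, the maximum of $t^e_\lambda$ over its vertices being attained at its starting vertex.
   Context: $d(u,v)$ denotes graph distance. For a vertex $u$ of $G=(V,E)$, $t^{e}_{\lambda}(u)=\sum_{v\in V\setminus\{u\}} d(u,v)\lambda^{d(u,v)}$, and $Mt^{e}_{\lambda}(G)=\max\{t^{e}_{\lambda}(u):u\in V\}$. A broom on $n$ vertices (with parameter $D$, $1\le D\le n-1$) is the graph consisting of a path $u=v_0v_1\cdots v_D$ together with $n-D-1$ further vertices, each adjacent only to $v_{D-1}$; the vertex $u=v_0$ is called its starting vertex. *)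

From HB Require Import structures.
From mathcomp Require Import all_boot all_order all_algebra.
Set Implicit Arguments. Unset Strict Implicit. Unset Printing Implicit Defensive.
Import Order.TTheory GRing.Theory Num.Theory.

(* A graph is an edge relation e : rel T on a finite vertex type T
   (simple = symmetric and irreflexive). *)

(* For a
   connected graph this is the usual shortest-path distance (a shortest
   walk has fewer than #|T| edges). *)
Definition gdist (T : finType) (e : rel T) (u v : T) : nat :=
  find (fun k => [exists p : k.-tuple T, path e u p && (last u p == v)])
       (iota 0 #|T|).

Local Open Scope ring_scope.

Definition te (R : realFieldType) (lam : R) (T : finType) (e : rel T) (u : T) : R :=
  \sum_(v : T | v != u) (gdist e u v)%:R * lam ^+ gdist e u v.

(* Mt^e_lambda(G) = max over vertices (all values are >= 0, and T is
   nonempty in the theorem, so the default 0 is harmless). *)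
Definition Mte (R : realFieldType) (lam : R) (T : finType) (e : rel T) : R :=
  \big[Num.max/0]_(u : T) te lam e u.

Definition broom_val (R : realFieldType) (lam : R) (n D : nat) : R :=
  lam * (1 - (D.+1)%:R * lam ^+ D + D%:R * lam ^+ D.+1) / (lam - 1) ^+ 2
  + ((n - D - 1) * D)%:R * lam ^+ D.

(* max_{1 <= D <= n-1} broom_val (all values > 0 for 0 < lam < 1). *)
Definition broom_bound (R : realFieldType) (lam : R) (n : nat) : R :=
  \big[Num.max/0]_(1 <= D < n) broom_val lam n D.

(* The broom on vertex set {0,...,n-1} with parameter D (1 <= D <= n-1):
   path 0 - 1 - ... - D, and vertices D+1, ..., n-1 adjacent only to D-1.
   Starting vertex is 0. *)
Definition broom_rel (n D : nat) : rel 'I_n :=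
  fun i j =>
    let a := nat_of_ord i in let b := nat_of_ord j in
    [|| (a.+1 == b) && (b <= D)%N,
        (b.+1 == a) && (a <= D)%N,
        (D < a)%N && (b == D.-1)
      | (D < b)%N && (a == D.-1)].
Arguments broom_rel : clear implicits.

From mathcomp Require Import all_boot all_order all_algebra.
From mathcomp Require Import zify ring.
Import Order.TTheory GRing.Theory Num.Theory.

(* With f k = k * lam^k, t^e_lam(u) is the sum of f over the n - 1 distances
   d(u,v), v <> u.  If u has eccentricity E, these distances lie in [1..E]
   and every value of [1..E] occurs (a shortest walk passes through every
   level).  Let D maximize f on [1..E]: keeping one vertex at each distance
   1, ..., D and bounding the remaining n - 1 - D terms by f D gives
   t^e_lam(u) <= f 1 + ... + f D + (n - 1 - D) f D, and the first part is the
   closed form in the bracket.  From the starting vertex of the broom with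
   parameter D there is exactly one vertex at each distance 1, ..., D - 1 and
   n - D vertices at distance D, so the bound is attained. *)

Set Implicit Arguments.
Unset Strict Implicit.
Unset Printing Implicit Defensive.

Section Walks.
Variables (T : finType) (e : rel T).

Definition walk (u : T) (k : nat) (v : T) : Prop :=
  exists p : seq T, [/\ size p = k, path e u p & last u p = v].

Lemma walk_refl u : walk u 0 u.
Proof. by exists [::]. Qed.

Lemma walk0_eq u v : walk u 0 v -> v = u.
Proof. by case=> -[|x p] [//= _ _ <-]. Qed.

Lemma walk_rcons u k v w : walk u k v -> e v w -> walk u k.+1 w.
Proof.
case=> p [<- up <-] evw; exists (rcons p w).
by rewrite size_rcons rcons_path last_rcons up evw.
Qed.

Lemma walk_cat u k v l w : walk u k v -> walk v l w -> walk u (k + l) w.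
Proof.
case=> p [<- up <-] [q [<- vq <-]]; exists (p ++ q).
by rewrite size_cat cat_path last_cat up vq.
Qed.

Lemma walk_split u k l w : walk u (k + l) w -> exists2 v, walk u k v & walk v l w.
Proof.
case=> p [sp + <-]; rewrite -{1}(cat_take_drop k p) cat_path => /andP[up1 up2].
exists (last u (take k p)).
  by exists (take k p); split=> //; apply: size_takel; rewrite sp leq_addr.
exists (drop k p); split=> //; first by rewrite size_drop sp addKn.
by rewrite -last_cat cat_take_drop.
Qed.

Lemma walk_tupleP u k v :
  reflect (walk u k v) [exists p : k.-tuple T, path e u p && (last u p == v)].
Proof.
apply: (iffP existsP) => [[p /andP[up /eqP pv]] | [p [sp up pv]]].
  by exists p; rewrite size_tuple.
have /eqP sp' := sp; exists (Tuple sp'); by rewrite /= up pv eqxx.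
Qed.

Lemma connect_walk u v : connect e u v -> exists2 k, (k < #|T|)%N & walk u k v.
Proof.
case/connectP=> p up ->; have [q uq q_uniq _] := shortenP up.
exists (size q); last by exists q.
by rewrite -[(size q).+1]/(size (u :: q)) -(card_uniqP q_uniq) max_card.
Qed.

Section Distance.
Variables (u : T).
Hypothesis connected_u : forall v, connect e u v.
Local Notation d := (gdist e u).

Lemma has_walk_length v :
  has (fun k => [exists p : k.-tuple T, path e u p && (last u p == v)]) (iota 0 #|T|).
Proof.
have [k lt_k_T walk_k] := connect_walk (connected_u v).
by apply/hasP; exists k; [rewrite mem_iota | apply/walk_tupleP].
Qed.

Lemma gdist_lt_card v : (d v < #|T|)%N.
Proof. by rewrite -[X in (_ < X)%N](size_iota 0) -has_find has_walk_length. Qed.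

Lemma gdist_walk v : walk u (d v) v.
Proof.
apply/walk_tupleP.
by have := nth_find 0%N (has_walk_length v); rewrite nth_iota ?gdist_lt_card.
Qed.

Lemma gdist_le v k : walk u k v -> (d v <= k)%N.
Proof.
move=> walk_k; case: (ltnP k #|T|) => [lt_k | le_T_k]; last first.
  exact: ltnW (leq_trans (gdist_lt_card v) le_T_k).
rewrite leqNgt; apply/negP => /(before_find 0%N).
by rewrite nth_iota // add0n /= => /negbT/walk_tupleP.
Qed.

Lemma gdist_refl : d u = 0%N.
Proof. by apply/eqP; rewrite -leqn0 gdist_le //; apply: walk_refl. Qed.

Lemma gdist_eq0 v : (d v == 0%N) = (v == u).
Proof.
apply/eqP/eqP => [d0 | ->]; last exact: gdist_refl.
by have := gdist_walk v; rewrite d0 => /walk0_eq.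
Qed.

Lemma gdist_level v j : (j <= d v)%N -> exists w, d w = j.
Proof.
move=> le_j; have := gdist_walk v.
rewrite -(subnKC le_j) => /walk_split[w walk_w walk_wv].
exists w; apply/eqP; rewrite eqn_leq gdist_le //=.
have := gdist_le (walk_cat (gdist_walk w) walk_wv); lia.
Qed.

End Distance.
End Walks.

Local Open Scope ring_scope.

Section SeqExtrema.
Variables (R : realDomainType) (I : eqType) (F : I -> R).

Lemma exists_argmax_seq (r : seq I) :
  r != [::] -> exists2 i, i \in r & {in r, forall j, F j <= F i}.
Proof.
elim: r => // i [|j r] IH _.
  by exists i; rewrite ?mem_head // => j; rewrite inE => /eqP ->.
have [k kr k_max] := IH isT.
have [le_ki | lt_ik] := lerP (F k) (F i).
  exists i; first exact: mem_head.
  by move=> m; rewrite inE => /predU1P[-> // | /k_max /le_trans]; apply.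
exists k; first by rewrite inE kr orbT.
by move=> m; rewrite inE => /predU1P[-> | /k_max //]; apply: ltW.
Qed.

Lemma sum_le_size_mul (s : seq I) (M : R) :
  {in s, forall i, F i <= M} -> \sum_(i <- s) F i <= (size s)%:R * M.
Proof.
elim: s => [|i s IH] le_M; first by rewrite big_nil mul0r.
rewrite big_cons /= -add1n natrD mulrDl mul1r lerD ?le_M ?mem_head //.
by apply: IH => j sj; apply: le_M; rewrite inE sj orbT.
Qed.

Lemma ler_sum_uniq_subset (r s : seq I) (M : R) :
  uniq r -> {subset r <= s} -> {in s, forall i, F i <= M} ->
  \sum_(i <- s) F i <= \sum_(i <- r) F i + (size s - size r)%:R * M.
Proof.
elim: r s => [|i r IH] s /=; first by rewrite big_nil add0r subn0 => _ _ /sum_le_size_mul.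
move=> /andP[ir r_uniq] sub_rs le_M.
have si : i \in s by apply: sub_rs; apply: mem_head.
rewrite (perm_big _ (perm_to_rem si)) !big_cons -addrA lerD2l.
have -> : (size s - (size r).+1 = size (rem i s) - size r)%N by rewrite size_rem //; lia.
apply: IH => // [j rj | j /mem_rem /le_M //].
have: j \in i :: rem i s by rewrite -(perm_mem (perm_to_rem si)) sub_rs // inE rj orbT.
by rewrite inE => /predU1P[eq_ji | //]; move: ir; rewrite -eq_ji rj.
Qed.

End SeqExtrema.

Definition weight (R : fieldType) (lam : R) (k : nat) : R := k%:R * lam ^+ k.

Lemma sum_weightE (R : fieldType) (lam : R) (D : nat) : lam != 1 ->
  \sum_(1 <= k < D.+1) weight lam k =
  lam * (1 - D.+1%:R * lam ^+ D + D%:R * lam ^+ D.+1) / (lam - 1) ^+ 2.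
Proof.
move=> lam_neq1; have sq_neq0 : (lam - 1) ^+ 2 != 0 by rewrite expf_neq0 // subr_eq0.
apply: (mulIf sq_neq0); rewrite divfK //.
elim: D => [|D IH]; first by rewrite big_geq //; ring.
by rewrite big_nat_recr //= mulrDl IH /weight !exprS !mulrSr; ring.
Qed.

Lemma broom_valE (R : realFieldType) (lam : R) (n D : nat) : lam != 1 ->
  broom_val lam n D = \sum_(1 <= k < D.+1) weight lam k + (n - D - 1)%:R * weight lam D.
Proof. by move=> lam_neq1; rewrite sum_weightE // /broom_val /weight natrM mulrA. Qed.

Lemma te_ge0 (R : realFieldType) (lam : R) (T : finType) (e : rel T) (u : T) :
  0 <= lam -> 0 <= te lam e u.
Proof. by move=> lam_ge0; apply: sumr_ge0 => v _; rewrite mulr_ge0 ?exprn_ge0. Qed.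

(* [D] maximizes [weight lam] on [1..E]: one term of each level [1..D] is
   kept, the other [size s - D] terms are bounded by [weight lam D]. *)
Lemma sum_weight_le_broom_val (R : realFieldType) (lam : R) (s : seq nat) (E : nat) :
  lam != 1 -> (0 < E)%N -> {in s, forall k, (0 < k <= E)%N} ->
  {subset index_iota 1 E.+1 <= s} ->
  exists2 D, (0 < D <= E)%N & \sum_(k <- s) weight lam k <= broom_val lam (size s).+1 D.
Proof.
move=> lam_neq1 E_gt0 s_range levels_in_s.
have levels_neq_nil : index_iota 1 E.+1 != [::] by rewrite -size_eq0 size_iota; lia.
have [D] := exists_argmax_seq (weight lam) levels_neq_nil.
rewrite mem_index_iota => /andP[D_gt0 D_le] D_max.
exists D; first by rewrite D_gt0.
rewrite broom_valE //.
apply: le_trans (ler_sum_uniq_subset (r := index_iota 1 D.+1) (M := weight lam D)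
  (iota_uniq _ _) _ _) _.
- move=> k; rewrite mem_index_iota => k_range.
  by apply: levels_in_s; rewrite mem_index_iota; lia.
- by move=> k /s_range k_range; apply: D_max; rewrite mem_index_iota; lia.
- by rewrite size_iota (_ : size s - (D.+1 - 1) = (size s).+1 - D - 1)%N //; lia.
Qed.

Lemma te_le_broom_val (R : realFieldType) (lam : R) (T : finType) (e : rel T) (u : T) :
  lam != 1 -> (1 < #|T|)%N -> (forall v, connect e u v) ->
  exists2 D, (0 < D < #|T|)%N & te lam e u <= broom_val lam #|T| D.
Proof.
move=> lam_neq1 T_gt1 conn_u; pose d := gdist e u.
pose s := [seq d v | v <- enum (predC1 u)].
have size_s : (size s).+1 = #|T| by rewrite size_map -cardE cardC1; lia.
have [w _ d_le_dw] := @arg_maxnP _ u predT d isT.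
have s_range k : k \in s -> (0 < k <= d w)%N.
  case/mapP=> v; rewrite mem_enum inE => v_neq_u ->.
  by rewrite lt0n (gdist_eq0 conn_u) v_neq_u; apply: d_le_dw.
have dw_gt0 : (0 < d w)%N.
  have : nth 0%N s 0 \in s by rewrite mem_nth // -ltnS size_s.
  by move/s_range; lia.
have levels_in_s : {subset index_iota 1 (d w).+1 <= s}.
  move=> k; rewrite mem_index_iota => /andP[k_gt0 k_le].
  have [v dv] := gdist_level conn_u k_le; rewrite -dv; apply: map_f.
  by rewrite mem_enum inE -(gdist_eq0 conn_u) dv -lt0n.
have [D D_range] := sum_weight_le_broom_val lam_neq1 dw_gt0 s_range levels_in_s.
have teE : te lam e u = \sum_(k <- s) weight lam k by rewrite big_map big_enum.
rewrite size_s -teE => te_le; exists D => //.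
by case/andP: D_range => -> /leq_ltn_trans; apply; apply: gdist_lt_card.
Qed.

Section Broom.
Variables (n D : nat).
Hypotheses (D_gt0 : (0 < D)%N) (D_lt_n : (D < n)%N).
Local Notation B := (broom_rel n D).

Lemma broom_rel_sym : symmetric B.
Proof.
by move=> x y; rewrite /broom_rel; do 4!case: (_ && _); rewrite ?orbT.
Qed.

Lemma broom_rel_minn x y : B x y -> (minn y D <= (minn x D).+1)%N.
Proof. by case/or4P=> /andP[/eqP eq_xy le_xy]; lia. Qed.

Lemma broom_walk_lower x k y : walk B x k y -> (minn y D <= minn x D + k)%N.
Proof.
case=> p [<- xp <-]; elim: p x xp => [|z p IH] x /=; first by rewrite addn0.
by case/andP=> /broom_rel_minn xz /IH /leq_trans; apply; rewrite addnS -addSn leq_add2r.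
Qed.

Lemma broom_walk_path (u v : 'I_n) : nat_of_ord u = 0%N -> (v <= D)%N -> walk B u v v.
Proof.
move=> u0; case: v => i /=; elim: i => [|i IH] lt_i_n le_i_D.
  by rewrite (_ : Ordinal lt_i_n = u); [apply: walk_refl | apply: val_inj].
by apply: walk_rcons (IH (ltnW lt_i_n) (ltnW le_i_D)) _; rewrite /broom_rel /= eqxx le_i_D.
Qed.

Lemma broom_walk (u v : 'I_n) : nat_of_ord u = 0%N -> walk B u (minn v D) v.
Proof.
move=> u0; case: (leqP v D) => [le_vD | lt_Dv].
  exact: broom_walk_path.
have lt_pD_n : (D.-1 < n)%N by lia.
rewrite -[X in walk _ _ X](prednK D_gt0).
apply: walk_rcons (broom_walk_path (v := Ordinal lt_pD_n) u0 (leq_pred _)) _.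
by rewrite /broom_rel /= lt_Dv eqxx !orbT.
Qed.

Lemma broom_connected x y : connect B x y.
Proof.
pose u : 'I_n := Ordinal (ltn_trans D_gt0 D_lt_n).
have connect_u v : connect B u v.
  by have [p [_ up <-]] := broom_walk v (erefl : nat_of_ord u = 0%N); apply/connectP; exists p.
by apply: connect_trans (connect_u y); rewrite (sym_connect_sym broom_rel_sym).
Qed.

Lemma broom_gdist (u v : 'I_n) : nat_of_ord u = 0%N -> gdist B u v = minn v D.
Proof.
move=> u0; have conn_u := broom_connected u.
apply/eqP; rewrite eqn_leq (gdist_le conn_u (broom_walk v u0)) /=.
by have := broom_walk_lower (gdist_walk conn_u v); rewrite u0 min0n.
Qed.

Lemma broom_te (R : realFieldType) (lam : R) (u : 'I_n) :
  nat_of_ord u = 0%N -> lam != 1 -> te lam B u = broom_val lam n D.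
Proof.
move=> u0 lam_neq1; rewrite broom_valE // /te.
rewrite (eq_bigr (fun v : 'I_n => weight lam (minn v D))) => [|v _]; last first.
  by rewrite broom_gdist.
rewrite (eq_bigl (fun v : 'I_n => v != 0%N :> nat)) => [|v]; last first.
  by rewrite -val_eqE /= u0.
rewrite -(big_mkord (fun i => i != 0%N) (fun i => weight lam (minn i D))).
rewrite big_ltn_cond /=; last lia.
rewrite big_nat_cond (eq_bigl (fun i => (1 <= i < n)%N && true)) => [|i]; last first.
  by case: i => [|i]; rewrite ?andbT.
rewrite -big_nat_cond (big_cat_nat _ (n := D.+1)) //=.
congr (_ + _).
  by apply: eq_big_nat => i le_iD; rewrite (minn_idPl _) //; lia.
rewrite (eq_big_nat _ _ (F2 := fun => weight lam D)) => [|i lt_Di]; last first.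
  by rewrite (minn_idPr _) //; lia.
by rewrite sumr_const_nat mulr_natl; congr (_ *+ _); lia.
Qed.

End Broom.

Lemma Mte_le_broom_bound (R : realFieldType) (lam : R) (T : finType) (e : rel T) :
  lam != 1 -> (1 < #|T|)%N -> (forall u v, connect e u v) ->
  Mte lam e <= broom_bound lam #|T|.
Proof.
move=> lam_neq1 T_gt1 conn; apply: bigmax_le => [|u _]; first exact: bigmax_ge_id.
have [D D_range te_le] := te_le_broom_val lam_neq1 T_gt1 (conn u).
by apply: le_trans te_le _; apply: le_bigmax_seq; rewrite ?mem_index_iota.
Qed.

Lemma broom_extremal (R : realFieldType) (lam : R) (n D : nat) :
  0 <= lam -> lam != 1 -> (0 < D < n)%N ->
  {in index_iota 1 n, forall k, broom_val lam n k <= broom_val lam n D} ->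
  Mte lam (broom_rel n D) = broom_bound lam n /\
  forall u : 'I_n, nat_of_ord u = 0%N -> te lam (broom_rel n D) u = broom_bound lam n.
Proof.
move=> lam_ge0 lam_neq1 /andP[D_gt0 D_lt_n] D_max.
pose root : 'I_n := Ordinal (ltn_trans D_gt0 D_lt_n).
have te_root u : nat_of_ord u = 0%N -> te lam (broom_rel n D) u = broom_val lam n D.
  by move=> u0; apply: broom_te.
have bound_le : broom_bound lam n <= broom_val lam n D.
  rewrite /broom_bound big_seq; apply: bigmax_le => [|k /D_max //].
  by rewrite -(te_root root) ?te_ge0.
have Mte_le : Mte lam (broom_rel n D) <= broom_bound lam n.
  have := Mte_le_broom_bound lam_neq1 _ (broom_connected D_gt0 D_lt_n).
  by rewrite card_ord; apply; lia.
have te_eq u : nat_of_ord u = 0%N -> te lam (broom_rel n D) u = broom_bound lam n.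
  move=> u0; apply/le_anti; rewrite te_root // bound_le andbT -(te_root u) //.
  exact: le_trans (le_bigmax _ _ u) Mte_le.
split=> //; apply/le_anti; rewrite Mte_le -(te_eq root) //.
exact: le_bigmax.
Qed.

Unset Implicit Arguments.

Theorem theorem5 (R : realFieldType) (lam : R) (n : nat) (T : finType) (e : rel T) :
  0 < lam < 1 -> (2 <= n)%N -> #|T| = n ->
  symmetric e -> irreflexive e -> (forall u v : T, connect e u v) ->
  Mte lam e <= broom_bound lam n /\
  (exists D : nat, [/\ (1 <= D)%N, (D <= n - 1)%N,
     Mte lam (broom_rel n D) = broom_bound lam n &
     forall u : 'I_n, nat_of_ord u = 0%N -> te lam (broom_rel n D) u = Mte lam (broom_rel n D)]).
Proof.
move=> /andP[lam_gt0 lam_lt1] n_ge2 card_T _ _ conn.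
have lam_neq1 : lam != 1 by rewrite lt_eqF.
split; first by rewrite -card_T Mte_le_broom_bound ?card_T.
have range_neq_nil : index_iota 1 n != [::] by rewrite -size_eq0 size_iota; lia.
have [D] := exists_argmax_seq (broom_val lam n) range_neq_nil.
rewrite mem_index_iota => D_range D_max.
have [Mte_eq te_eq] := broom_extremal (ltW lam_gt0) lam_neq1 D_range D_max.
exists D; split; [lia | lia | by [] | by move=> u u0; rewrite Mte_eq te_eq].
Qed.
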